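(* Let $f:[0,\infty)\to[0,\infty)$ be a differentiable convex function with $f(0)=0$, let $0<m<M$, and let $\sigma$ be a matrix mean. Then for every unitarily invariant norm $|||\cdot|||$ on $\mathbb{M}_n$ and all $A,B\in\mathbb{P}_n^+$ with spectra contained in $[m,M]$, $$|||f(A)\sigma f(B)-f(A\sigma B)|||\le \big(f'(M)-f'(0)\big)\,|||A\sigma B|||.$$
   Context: $\mathbb{M}_n$ is the algebra of $n\times n$ complex matrices; a norm $|||\cdot|||$ on $\mathbb{M}_n$ is unitarily invariant if $|||UAV|||=|||A|||$ for all $A$ and all unitaries $U,V$. $\mathbb{P}_n$ (resp. $\mathbb{P}_n^+$) denotes the set of $n\times n$ complex positive semidefinite (resp. positive definite) matrices, $I$ is the identity matrix and $\le$ is the Löwner order. For a Hermitian matrix $A$ and a real function $f$ defined on its spectrum, $f(A)$ is defined by functional calculus. ''Spectrum contained in $[m,M]$'' means $mI\le A\le MI$. A matrix mean is a binary operation $\sigma:\mathbb{P}_n\times\mathbb{P}_n\to\mathbb{P}_n$ such that (i) $A\le C$ and $B\le D$ imply $A\sigma B\le C\sigma D$; (ii) $C^*(A\sigma B)C\le (C^*AC)\sigma(C^*BC)$ for all $C$; (iii) if $A_k\downarrow A$ and $B_k\downarrow B$ (decreasing sequences converging) then $A_k\sigma B_k\downarrow A\sigma B$; (iv) $I\sigma I=I$. *)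

From HB Require Import structures.
From mathcomp Require Import all_boot all_order all_algebra.
From mathcomp Require Import sesquilinear spectral.
From mathcomp Require Import complex.
From mathcomp Require Import all_classical all_reals.
From mathcomp Require Import topology normedtype sequences derive.

Set Implicit Arguments.
Unset Strict Implicit.
Unset Printing Implicit Defensive.

Import Order.TTheory GRing.Theory Num.Theory.
Import numFieldNormedType.Exports.
Local Open Scope ring_scope.
Local Open Scope sesquilinear_scope.
Local Open Scope classical_set_scope.
Local Open Scope ring_scope.

Section MatrixAnalysis.
Variable R : realType.
Local Notation C := (R[i]).

Definition RtoC (x : R) : C := (x%:C)%C.

Definition adjmx (m n : nat) (A : 'M[C]_(m, n)) : 'M[C]_(n, m) := A ^t*.

Definition psdmx (n : nat) (A : 'M[C]_n) : Prop :=
  A \is hermsymmx /\ forall v : 'rV[C]_n, 0 <= (v *m A *m v ^t*) 0 0.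

Definition pdmx (n : nat) (A : 'M[C]_n) : Prop :=
  A \is hermsymmx /\ forall v : 'rV[C]_n, v != 0 -> 0 < (v *m A *m v ^t*) 0 0.

Definition loewner_le (n : nat) (A B : 'M[C]_n) : Prop := psdmx (B - A).

Definition spec_in (n : nat) (m M : R) (A : 'M[C]_n) : Prop :=
  loewner_le (RtoC m)%:M A /\ loewner_le A (RtoC M)%:M.

(* For Hermitian A the eigenvalues lambda_i are real, so f is applied to
   their real parts. *)
Definition mxfun (f : R -> R) (n : nat) (A : 'M[C]_n) : 'M[C]_n :=
  invmx (spectralmx A) *m
  diag_mx (map_mx (fun z : C => RtoC (f (complex.Re z))) (spectral_diag A))
  *m spectralmx A.

(* entrywise convergence of a sequence of matrices (= convergence in any
   norm on the finite-dimensional space M_n) *)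
Definition mx_cvg (n : nat) (Ak : nat -> 'M[C]_n) (A : 'M[C]_n) : Prop :=
  forall i j : 'I_n,
    (fun k => complex.Re (Ak k i j)) @ \oo --> complex.Re (A i j) /\
    (fun k => complex.Im (Ak k i j)) @ \oo --> complex.Im (A i j).

Definition mx_decr_to (n : nat) (Ak : nat -> 'M[C]_n) (A : 'M[C]_n) : Prop :=
  (forall k, loewner_le (Ak k.+1) (Ak k)) /\ mx_cvg Ak A.

(* matrix mean sigma : P_n x P_n -> P_n (Kubo--Ando axioms (i)-(iv)) *)
Definition matrix_mean (n : nat) (sigma : 'M[C]_n -> 'M[C]_n -> 'M[C]_n)
  : Prop :=
  (forall A B, psdmx A -> psdmx B -> psdmx (sigma A B)) /\
  (forall A B C' D, psdmx A -> psdmx B -> psdmx C' -> psdmx D ->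
     loewner_le A C' -> loewner_le B D ->
     loewner_le (sigma A B) (sigma C' D)) /\
  (forall A B (X : 'M[C]_n), psdmx A -> psdmx B ->
     loewner_le (adjmx X *m sigma A B *m X)
                (sigma (adjmx X *m A *m X) (adjmx X *m B *m X))) /\
  (forall (Ak Bk : nat -> 'M[C]_n) A B,
     (forall k, psdmx (Ak k)) -> (forall k, psdmx (Bk k)) ->
     psdmx A -> psdmx B ->
     mx_decr_to Ak A -> mx_decr_to Bk B ->
     mx_decr_to (fun k => sigma (Ak k) (Bk k)) (sigma A B)) /\
  sigma 1%:M 1%:M = 1%:M.

Definition mx_norm (n : nat) (N : 'M[C]_n -> R) : Prop :=
  (forall A, 0 <= N A) /\
  (forall A, N A = 0 -> A = 0) /\
  (forall (c : C) A, RtoC (N (c *: A)) = `|c| * RtoC (N A)) /\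
  (forall A B, N (A + B) <= N A + N B).

Definition unitarily_invariant_norm (n : nat) (N : 'M[C]_n -> R) : Prop :=
  mx_norm N /\
  forall (A U V : 'M[C]_n), U \is unitarymx -> V \is unitarymx ->
    N (U *m A *m V) = N A.

End MatrixAnalysis.

(* For 0 <= x <= M, convexity and f(0) = 0 give a x <= f(x) <= b x with a = f'(0) and
   b = f'(M), so by the functional calculus a Z <= f(Z) <= b Z in the Loewner order for
   Z = A, B and T = A sigma B (whose spectrum lies in [0, M] by monotonicity and
   homogeneity of sigma).  Monotonicity and positive homogeneity of sigma then put
   f(A) sigma f(B) in the same Loewner interval [a T, b T] as f(T), so their difference H
   satisfies -(b - a) T <= H <= (b - a) T.  For a unitarily invariant norm, -T <= H <= T
   implies |||H||| <= |||T|||: in an eigenbasis of H, the diagonal of H is a contraction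
   of the diagonal of T, and both contractions by real diagonal matrices and pinching to
   the diagonal are averages of unitary conjugates.  The upper homogeneity bound needs
   b > 0, so b is replaced by b + e and e is let go to 0. *)

From HB Require Import structures.
From mathcomp Require Import all_boot all_order all_algebra.
From mathcomp Require Import sesquilinear spectral.
From mathcomp Require Import complex.
From mathcomp Require Import all_classical all_reals.
From mathcomp Require Import topology normedtype sequences derive.
From mathcomp Require Import ring lra.

Set Implicit Arguments.
Unset Strict Implicit.
Unset Printing Implicit Defensive.

Import Order.TTheory GRing.Theory Num.Theory.
Import numFieldNormedType.Exports.
Local Open Scope ring_scope.
Local Open Scope sesquilinear_scope.

Section RealToComplex.
Variable R : realType.
Implicit Types x y : R.

Lemma RtoC1 : RtoC 1 = 1 :> R[i].
Proof. exact: rmorph1. Qed.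

Lemma RtoCD x y : RtoC (x + y) = RtoC x + RtoC y.
Proof. exact: rmorphD. Qed.

Lemma RtoCB x y : RtoC (x - y) = RtoC x - RtoC y.
Proof. exact: rmorphB. Qed.

Lemma RtoCM x y : RtoC (x * y) = RtoC x * RtoC y.
Proof. exact: rmorphM. Qed.

Lemma RtoC_inj : injective (@RtoC R).
Proof. exact: complexI. Qed.

Lemma RtoC_ge0 x : (0 <= RtoC x) = (0 <= x).
Proof. exact: ler0c. Qed.

Lemma ler_RtoC x y : (RtoC x <= RtoC y) = (x <= y).
Proof. exact: lecR. Qed.

Lemma conj_RtoC x : (RtoC x)^* = RtoC x.
Proof. exact: conjc_real. Qed.

End RealToComplex.

Section PositiveSemidefinite.
Variables (R : realType) (n : nat).
Local Notation C := R[i].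
Implicit Types (A B D : 'M[C]_n) (x : R).

Lemma hermsymmxP A : reflect (A ^t* = A) (A \is hermsymmx).
Proof.
apply: (iffP idP) => [/is_hermitianmxP|eA].
  by rewrite expr0 scale1r => eA; rewrite {2}eA.
by apply/is_hermitianmxP; rewrite expr0 scale1r eA.
Qed.

Lemma trmxC_mul m p q (X : 'M[C]_(m, p)) (Y : 'M[C]_(p, q)) :
  (X *m Y) ^t* = Y ^t* *m X ^t*.
Proof. by rewrite trmx_mul map_mxM. Qed.

Lemma trmxCD A B : (A + B) ^t* = A ^t* + B ^t*.
Proof. by apply/matrixP => i j; rewrite !mxE rmorphD. Qed.

Lemma trmxCB A B : (A - B) ^t* = A ^t* - B ^t*.
Proof. by apply/matrixP => i j; rewrite !mxE rmorphB. Qed.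

Lemma trmxCZ (c : C) A : (c *: A) ^t* = c^* *: A ^t*.
Proof. by apply/matrixP => i j; rewrite !mxE rmorphM. Qed.

Lemma trmxC_scalar (c : C) : (c%:M : 'M[C]_n) ^t* = c^*%:M.
Proof. by apply/matrixP => i j; rewrite !mxE rmorphMn eq_sym. Qed.

Lemma psdmx_herm A : psdmx A -> A ^t* = A.
Proof. by case=> /hermsymmxP. Qed.

Lemma pdmx_psdmx A : pdmx A -> psdmx A.
Proof.
case=> hA posA; split => // v; have [->|v0] := eqVneq v 0.
  by rewrite !mul0mx mxE.
exact/ltW/posA.
Qed.

Lemma psdmx_congr A (X : 'M[C]_n) : psdmx A -> psdmx (X ^t* *m A *m X).
Proof.
case=> /hermsymmxP hA posA; split.
  by apply/hermsymmxP; rewrite !trmxC_mul trmxCK hA mulmxA.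
by move=> v; have := posA (v *m X ^t*); rewrite !trmxC_mul trmxCK !mulmxA.
Qed.

Lemma psdmxD A B : psdmx A -> psdmx B -> psdmx (A + B).
Proof.
case=> /hermsymmxP hA posA [/hermsymmxP hB posB]; split.
  by apply/hermsymmxP; rewrite trmxCD hA hB.
by move=> v; rewrite mulmxDr mulmxDl mxE addr_ge0.
Qed.

Lemma psdmxZ x A : 0 <= x -> psdmx A -> psdmx (RtoC x *: A).
Proof.
move=> x0 [/hermsymmxP hA posA]; split.
  by apply/hermsymmxP; rewrite trmxCZ hA conj_RtoC.
by move=> v; rewrite -scalemxAr -scalemxAl mxE mulr_ge0 ?RtoC_ge0.
Qed.

Lemma psdmx1 : psdmx (1%:M : 'M[C]_n).
Proof.
split; first by apply/hermsymmxP; rewrite trmxC_scalar rmorph1.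
by move=> v; rewrite mulmx1 mxE sumr_ge0 // => j _; rewrite !mxE mulcJ_ge0.
Qed.

Lemma psdmx_diag (d : 'rV[C]_n) : (forall j, 0 <= d 0 j) -> psdmx (diag_mx d).
Proof.
move=> d_ge0; split.
  apply/hermsymmxP/matrixP => i j; rewrite !mxE eq_sym.
  have [->|_] := eqVneq i j; last by rewrite !mulr0n rmorph0.
  by rewrite !mulr1n; apply/CrealP/ger0_real.
move=> v; rewrite mxE sumr_ge0 // => k _.
rewrite mxE (bigD1 k) //= big1 ?addr0 => [|l lk]; last first.
  by rewrite !mxE (negbTE lk) mulr0n mulr0.
by rewrite !mxE eqxx mulr1n mulrAC mulr_ge0 ?mulcJ_ge0.
Qed.

Lemma psdmx_diag_ge0 A j : psdmx A -> 0 <= A j j.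
Proof.
case=> _ /(_ (delta_mx 0 j)); rewrite -rowE mxE (bigD1 j) //= big1 ?addr0.
  by rewrite !mxE !eqxx /= rmorph1 mulr1.
by move=> k kj; rewrite !mxE (negbTE kj) /= rmorph0 mulr0.
Qed.

Lemma loewner_le_trans A B D : loewner_le A B -> loewner_le B D -> loewner_le A D.
Proof. by move=> AB BD; have := psdmxD BD AB; rewrite addrA subrK. Qed.

Lemma unitary_conj_scalar (U : 'M[C]_n) (c : C) :
  U \is unitarymx -> U *m c%:M *m U ^t* = c%:M.
Proof. by move=> /unitarymxP UU; rewrite mul_mx_scalar -scalemxAl UU scalemx1. Qed.

End PositiveSemidefinite.

Section FunctionalCalculus.
Variables (R : realType) (n : nat) (A : 'M[R[i]]_n).
Hypothesis hermA : A \is hermsymmx.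
Local Notation U := (spectralmx A).
Local Notation d := (spectral_diag A).

Lemma spectral_hermitianE : A = U ^t* *m diag_mx d *m U.
Proof.
have /orthomx_spectralP {1}-> := hermitian_normalmx hermA.
by rewrite invmx_unitary // spectral_unitarymx.
Qed.

Lemma spectral_conj : U *m A *m U ^t* = diag_mx d.
Proof.
have /unitarymxP UU := spectral_unitarymx A.
by rewrite [X in _ *m X *m _]spectral_hermitianE !mulmxA UU mul1mx -mulmxA UU mulmx1.
Qed.

Lemma spectral_diag_real j : d 0 j = RtoC (complex.Re (d 0 j)).
Proof.
have /mxOverP/(_ 0 j) := hermitian_spectral_diag_real hermA.
by rewrite /RtoC => /RRe_real ->.
Qed.

Lemma mxfunE (g : R -> R) :
  mxfun g A = U ^t* *m diag_mx (map_mx (fun z => RtoC (g (complex.Re z))) d) *m U.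
Proof. by rewrite /mxfun invmx_unitary // spectral_unitarymx. Qed.

Lemma spec_in_eigenvalue c e j :
  spec_in c e A -> c <= complex.Re (d 0 j) <= e.
Proof.
case=> /(psdmx_congr (U ^t*)) + /(psdmx_congr (U ^t*)).
rewrite !trmxCK !(mulmxBl, mulmxBr) spectral_conj.
rewrite !unitary_conj_scalar ?spectral_unitarymx //.
move=> /(psdmx_diag_ge0 j) lo /(psdmx_diag_ge0 j) hi.
rewrite !mxE eqxx !mulr1n !subr_ge0 in lo hi.
rewrite spectral_diag_real in lo hi.
by rewrite !ler_RtoC in lo hi; rewrite lo hi.
Qed.

Lemma psdmx_mxfun c e (g : R -> R) : spec_in c e A ->
  (forall x, c <= x <= e -> 0 <= g x) -> psdmx (mxfun g A).
Proof.
move=> specA g_ge0; rewrite mxfunE; apply/psdmx_congr/psdmx_diag => j.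
by rewrite mxE RtoC_ge0 g_ge0 // (spec_in_eigenvalue _ specA).
Qed.

Lemma mxfunB (g h : R -> R) : mxfun g A - mxfun h A = mxfun (fun x => g x - h x) A.
Proof.
rewrite !mxfunE -mulmxBl -mulmxBr -linearB; congr (_ *m diag_mx _ *m _).
by apply/matrixP => i j; rewrite !mxE RtoCB.
Qed.

Lemma le_mxfun c e (g h : R -> R) : spec_in c e A ->
  (forall x, c <= x <= e -> g x <= h x) -> loewner_le (mxfun g A) (mxfun h A).
Proof.
move=> specA gh; rewrite /loewner_le mxfunB.
by apply: psdmx_mxfun specA _ => x /gh; rewrite subr_ge0.
Qed.

Lemma mxfun_scale (a : R) : mxfun (fun x => a * x) A = RtoC a *: A.
Proof.
rewrite mxfunE [in RHS]spectral_hermitianE scalemxAl scalemxAr -linearZ /=.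
congr (_ *m diag_mx _ *m _); apply/matrixP => i j.
by rewrite !mxE ord1 RtoCM -spectral_diag_real.
Qed.

Lemma mxfun_loewner_bounds c e (a b : R) (g : R -> R) : spec_in c e A ->
  (forall x, c <= x <= e -> a * x <= g x <= b * x) ->
  loewner_le (RtoC a *: A) (mxfun g A) /\ loewner_le (mxfun g A) (RtoC b *: A).
Proof.
move=> specA g_bnd; rewrite -!mxfun_scale.
by split; apply: le_mxfun specA _ => x /g_bnd /andP[].
Qed.

End FunctionalCalculus.

Section MatrixMean.
Variables (R : realType) (n : nat).
Variable sigma : 'M[R[i]]_n -> 'M[R[i]]_n -> 'M[R[i]]_n.
Hypothesis mean_sigma : matrix_mean sigma.
Implicit Types (A B P Q : 'M[R[i]]_n) (c : R).

Lemma mean_psdmx P Q : psdmx P -> psdmx Q -> psdmx (sigma P Q).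
Proof. by case: mean_sigma => psd_sigma _; apply: psd_sigma. Qed.

Lemma le_mean A B P Q : psdmx A -> psdmx B -> psdmx P -> psdmx Q ->
  loewner_le A P -> loewner_le B Q -> loewner_le (sigma A B) (sigma P Q).
Proof. by case: mean_sigma => _ [mono _]; apply: mono. Qed.

(* Axiom (ii) for the congruence by [sqrt c * I]. *)
Lemma mean_scale_ge c P Q : 0 <= c -> psdmx P -> psdmx Q ->
  loewner_le (RtoC c *: sigma P Q) (sigma (RtoC c *: P) (RtoC c *: Q)).
Proof.
move=> c_ge0 psdP psdQ; case: mean_sigma => _ [_ [transformer _]].
have sqrt_congr X : adjmx (RtoC (Num.sqrt c))%:M *m X *m (RtoC (Num.sqrt c))%:M
                    = RtoC c *: X.
  rewrite /adjmx trmxC_scalar conj_RtoC mul_scalar_mx mul_mx_scalar scalerA.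
  by rewrite -RtoCM -expr2 sqr_sqrtr.
by have := transformer P Q (RtoC (Num.sqrt c))%:M psdP psdQ; rewrite !sqrt_congr.
Qed.

Lemma mean_scale_le c P Q : 0 < c -> psdmx P -> psdmx Q ->
  loewner_le (sigma (RtoC c *: P) (RtoC c *: Q)) (RtoC c *: sigma P Q).
Proof.
move=> c_gt0 psdP psdQ.
have scaleK (X : 'M[R[i]]_n) : RtoC c^-1 *: (RtoC c *: X) = X.
  by rewrite scalerA -RtoCM mulVf ?gt_eqF // RtoC1 scale1r.
have scaleKV (X : 'M[R[i]]_n) : RtoC c *: (RtoC c^-1 *: X) = X.
  by rewrite scalerA -RtoCM mulfV ?gt_eqF // RtoC1 scale1r.
have cV_ge0 : 0 <= c^-1 by rewrite invr_ge0 ltW.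
have := mean_scale_ge cV_ge0 (psdmxZ (ltW c_gt0) psdP)
  (psdmxZ (ltW c_gt0) psdQ).
by rewrite !scaleK => /(psdmxZ (ltW c_gt0)); rewrite scalerBr scaleKV.
Qed.

Lemma mean_ge_scale c A B P Q : 0 <= c ->
  psdmx A -> psdmx B -> psdmx P -> psdmx Q ->
  loewner_le (RtoC c *: A) P -> loewner_le (RtoC c *: B) Q ->
  loewner_le (RtoC c *: sigma A B) (sigma P Q).
Proof.
move=> c_ge0 psdA psdB psdP psdQ AP BQ.
apply: loewner_le_trans (mean_scale_ge c_ge0 psdA psdB) _.
exact: le_mean (psdmxZ c_ge0 psdA) (psdmxZ c_ge0 psdB) psdP psdQ AP BQ.
Qed.

Lemma mean_le_scale c A B P Q : 0 < c ->
  psdmx A -> psdmx B -> psdmx P -> psdmx Q ->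
  loewner_le P (RtoC c *: A) -> loewner_le Q (RtoC c *: B) ->
  loewner_le (sigma P Q) (RtoC c *: sigma A B).
Proof.
move=> c_gt0 psdA psdB psdP psdQ PA QB; have c_ge0 := ltW c_gt0.
apply: loewner_le_trans (mean_scale_le c_gt0 psdA psdB).
exact: le_mean psdP psdQ (psdmxZ c_ge0 psdA) (psdmxZ c_ge0 psdB) PA QB.
Qed.

Lemma mean_le_scalar c A B : 0 < c -> psdmx A -> psdmx B ->
  loewner_le A (RtoC c)%:M -> loewner_le B (RtoC c)%:M ->
  loewner_le (sigma A B) (RtoC c)%:M.
Proof.
move=> c_gt0 psdA psdB; rewrite -[(RtoC c)%:M]scalemx1 => AC BC.
have [_ [_ [_ [_ mean11]]]] := mean_sigma.
by rewrite -mean11; exact: mean_le_scale c_gt0 (psdmx1 _ _) (psdmx1 _ _) psdA psdB AC BC.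
Qed.

End MatrixMean.

Lemma complex_sandwich (R : rcfType) (x y : R[i]) : 0 <= x + y -> 0 <= x - y ->
  [/\ x = (complex.Re x)%:C%C, y = (complex.Re y)%:C%C
    & - complex.Re x <= complex.Re y <= complex.Re x].
Proof.
case: x => a b; case: y => p q; rewrite !lecE /=.
move=> /andP[/eqP bq ap] /andP[/eqP bq' am].
have -> : b = 0 by lra.
have -> : q = 0 by lra.
by split=> //; apply/andP; split; lra.
Qed.

(* For [x = 0] the ratio is the junk value [y / 0 = 0], which is harmless as then [y = 0]. *)
Lemma sandwich_ratio (R : realFieldType) (x y : R) : - x <= y <= x ->
  -1 <= y / x <= 1 /\ y / x * x = y.
Proof.
case/andP=> lo hi; have [x0|x_neq0] := eqVneq x 0.
  by rewrite x0 invr0 mulr0 mul0r lerN10 ler01; split=> //; lra.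
have x_gt0 : 0 < x by rewrite lt_def x_neq0 /=; lra.
by rewrite divfK // ler_pdivrMr // ler_pdivlMr // mul1r mulN1r lo hi.
Qed.

Section UnitarilyInvariantNorm.
Variables (R : realType) (n : nat) (N : 'M[R[i]]_n -> R).
Hypothesis normN : unitarily_invariant_norm N.
Local Notation C := R[i].
Implicit Types (H T X Y : 'M[C]_n).

Lemma N_ge0 X : 0 <= N X.
Proof. by case: normN => [[]]. Qed.

Lemma N_triangle X Y : N (X + Y) <= N X + N Y.
Proof. by case: normN => [[_ [_ [_]]]]. Qed.

Lemma N_scale (c : R) X : 0 <= c -> N (RtoC c *: X) = c * N X.
Proof.
move=> c_ge0; case: normN => [[_ [_ [homN _]]] _]; apply: RtoC_inj.
by rewrite homN RtoCM ger0_norm ?RtoC_ge0.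
Qed.

Lemma N_unitary U V X : U \is unitarymx -> V \is unitarymx -> N (U *m X *m V) = N X.
Proof. by case: normN => _; apply. Qed.

Lemma unitarymx1 : (1%:M : 'M[C]_n) \is unitarymx.
Proof. by apply/unitarymxP; rewrite trmx1 map_mx1 mulmx1. Qed.

Lemma N_unitaryl U X : U \is unitarymx -> N (U *m X) = N X.
Proof. by move=> unitU; rewrite -[U *m X]mulmx1 N_unitary // unitarymx1. Qed.

Lemma N_convex (a b : R) X Y : 0 <= a -> 0 <= b ->
  N (RtoC a *: X + RtoC b *: Y) <= a * N X + b * N Y.
Proof. by move=> a_ge0 b_ge0; rewrite -!N_scale //; apply: N_triangle. Qed.

Definition sign_mx (k : 'I_n) : 'M[C]_n :=
  diag_mx (\row_j (if j == k then -1 else 1)).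

Lemma sign_mx_adj k : (sign_mx k) ^t* = sign_mx k.
Proof.
apply/matrixP => i j; rewrite !mxE rmorphMn.
have [->|ij] := eqVneq i j; last by rewrite /= !mulr0n.
by rewrite /= !mulr1n; case: ifP; rewrite ?rmorphN rmorph1.
Qed.

Lemma sign_mx_unitary k : sign_mx k \is unitarymx.
Proof.
apply/unitarymxP; rewrite sign_mx_adj mul_diag_mx.
apply/matrixP => i j; rewrite !mxE.
have [->|ij] := eqVneq i j; last by rewrite /= mulr0n mulr0.
by rewrite /= mulr1n; case: ifP; rewrite ?mulrNN mulr1.
Qed.

Definition diag_step (k : 'I_n) (t : R) : 'M[C]_n :=
  diag_mx (\row_j (if j == k then RtoC t else 1)).

(* [diag_step k t] is the convex combination [(1+t)/2 * I + (1-t)/2 * sign_mx k]. *)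
Lemma N_diag_step_le k t X : -1 <= t <= 1 -> N (diag_step k t *m X) <= N X.
Proof.
move=> /andP[t_ge t_le].
have a_ge0 : 0 <= (1 + t) / 2 by rewrite divr_ge0 //; lra.
have b_ge0 : 0 <= (1 - t) / 2 by rewrite divr_ge0 //; lra.
have -> : diag_step k t *m X =
    RtoC ((1 + t) / 2) *: X + RtoC ((1 - t) / 2) *: (sign_mx k *m X).
  apply/matrixP => i j; rewrite !mul_diag_mx !mxE mulrA -mulrDl; congr (_ * _).
  case: (i == k); first by rewrite mulrN1 -RtoCB; congr RtoC; field.
  by rewrite mulr1 -RtoCD -RtoC1; congr RtoC; field.
apply: le_trans (N_convex _ _ a_ge0 b_ge0) _.
rewrite N_unitaryl ?sign_mx_unitary // -mulrDl.
by rewrite (_ : (1 + t) / 2 + (1 - t) / 2 = 1) ?mul1r //; field.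
Qed.

Definition diag_prefix (r : nat) (g : 'I_n -> R) : 'M[C]_n :=
  diag_mx (\row_j (if (j < r)%N then RtoC (g j) else 1)).

Lemma diag_prefix_step (k : 'I_n) g :
  diag_prefix k.+1 g = diag_step k (g k) *m diag_prefix k g.
Proof.
apply/matrixP => i j; rewrite mul_diag_mx !mxE.
have [->|ij] := eqVneq i j; last by rewrite /= !mulr0n mulr0.
rewrite /= !mulr1n; have [->|jk] := eqVneq j k; first by rewrite ltnSn ltnn mulr1.
by rewrite mul1r ltnS leq_eqVlt (_ : (j == k :> nat) = false) //; apply: negbTE.
Qed.

Lemma N_diag_contract g X : (forall j, -1 <= g j <= 1) ->
  N (diag_mx (\row_j RtoC (g j)) *m X) <= N X.
Proof.
move=> g_bnd; have -> : diag_mx (\row_j RtoC (g j)) = diag_prefix n g.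
  by apply/matrixP => i j; rewrite !mxE ltn_ord.
suff prefix_le r : (r <= n)%N -> N (diag_prefix r g *m X) <= N X by exact: prefix_le.
elim: r => [_|r IH rn].
  suff -> : diag_prefix 0 g = 1%:M by rewrite mul1mx.
  by apply/matrixP => i j; rewrite !mxE.
have -> : r = Ordinal rn by [].
rewrite diag_prefix_step -mulmxA.
exact: le_trans (N_diag_step_le _ _ (g_bnd _)) (IH (ltnW rn)).
Qed.

Definition pinch (r : nat) Y : 'M[C]_n :=
  \matrix_(i, j) (if (i == j) || ((r <= i)%N && (r <= j)%N) then Y i j else 0).

(* Averaging [Y] with its conjugate by [sign_mx k] kills the off-diagonal entries of
   row and column [k]; doing this for every [k] pinches [Y] down to its diagonal. *)
Lemma pinch_step (k : 'I_n) Y :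
  pinch k.+1 Y = RtoC 2^-1 *: pinch k Y + RtoC 2^-1 *: (sign_mx k *m pinch k Y *m sign_mx k).
Proof.
have half_add (x : C) : RtoC 2^-1 * x + RtoC 2^-1 * x = x.
  by rewrite -mulrDl -RtoCD (_ : 2^-1 + 2^-1 = 1) ?RtoC1 ?mul1r //; field.
apply/matrixP => i j; rewrite /sign_mx mul_diag_mx mul_mx_diag !mxE.
have [->|ik] := eqVneq i k; have [->|jk] := eqVneq j k.
- by rewrite /= mulN1r mulrN1 opprK half_add.
- by rewrite /= ltnn /= mulr1 mulN1r mulrN subrr.
- by rewrite (negbTE ik) ltnn leqnn !andbF andbT /= !mul1r mulrN1 mulrN subrr.
have ki : (k < i)%N = (k <= i)%N by rewrite ltn_neqAle val_eqE eq_sym ik.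
have kj : (k < j)%N = (k <= j)%N by rewrite ltn_neqAle val_eqE eq_sym jk.
rewrite ki kj mul1r mulr1; case: ifP => _; first by rewrite half_add.
by rewrite mulr0 addr0.
Qed.

Lemma N_diag_le Y : N (diag_mx (\row_j Y j j)) <= N Y.
Proof.
have -> : diag_mx (\row_j Y j j) = pinch n Y.
  apply/matrixP => i j; rewrite !mxE leqNgt ltn_ord orbF.
  by have [->|_] := eqVneq i j; rewrite ?mulr1n ?mulr0n.
suff pinch_le r : (r <= n)%N -> N (pinch r Y) <= N Y by exact: pinch_le.
have half_ge0 : 0 <= 2^-1 :> R by rewrite invr_ge0.
elim: r => [_|r IH rn].
  suff -> : pinch 0 Y = Y by [].
  by apply/matrixP => i j; rewrite mxE !leq0n orbT.
have -> : r = Ordinal rn by [].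
rewrite pinch_step; apply: le_trans (N_convex _ _ half_ge0 half_ge0) _.
rewrite N_unitary ?sign_mx_unitary // -mulrDl (_ : 2^-1 + 2^-1 = 1) ?mul1r; last by field.
exact: IH (ltnW rn).
Qed.

Lemma N_diag_sandwich T (d : 'rV[C]_n) :
  psdmx (T + diag_mx d) -> psdmx (T - diag_mx d) -> N (diag_mx d) <= N T.
Proof.
move=> psd_add psd_sub.
have bnd j : [/\ T j j = RtoC (complex.Re (T j j)), d 0 j = RtoC (complex.Re (d 0 j))
    & - complex.Re (T j j) <= complex.Re (d 0 j) <= complex.Re (T j j)].
  apply: complex_sandwich.
    by have := psdmx_diag_ge0 j psd_add; rewrite !mxE eqxx mulr1n.
  by have := psdmx_diag_ge0 j psd_sub; rewrite !mxE eqxx mulr1n.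
pose g j := complex.Re (d 0 j) / complex.Re (T j j).
have -> : diag_mx d = diag_mx (\row_j RtoC (g j)) *m diag_mx (\row_j T j j).
  apply/matrixP => i j; rewrite mul_diag_mx !mxE.
  have [->|_] := eqVneq i j; last by rewrite /= !mulr0n mulr0.
  have [Tjj djj /sandwich_ratio[_ ratio]] := bnd j.
  by rewrite !mulr1n Tjj -RtoCM ratio -djj.
apply: le_trans (N_diag_contract _ _) (N_diag_le _) => j.
by have [_ _ /sandwich_ratio[]] := bnd j.
Qed.

Lemma herm_sandwich T H : psdmx (T + H) -> psdmx (T - H) -> H \is hermsymmx.
Proof.
move=> /psdmx_herm adj_add /psdmx_herm adj_sub; apply/hermsymmxP.
rewrite trmxCD in adj_add; rewrite trmxCB in adj_sub.
have twice X Y : (X + Y) - (X - Y) = Y *+ 2 by rewrite opprB addrC addrA subrK mulr2n.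
have two_neq0 : (2 : C) != 0 by rewrite pnatr_eq0.
apply: (scalerI two_neq0); rewrite !scaler_nat -(twice (T ^t*)) -(twice T).
by rewrite adj_add adj_sub.
Qed.

Lemma N_sandwich T H : psdmx (T + H) -> psdmx (T - H) -> N H <= N T.
Proof.
move=> psd_add psd_sub; have hermH := herm_sandwich psd_add psd_sub.
have unitV := spectral_unitarymx H.
have unitVt : (spectralmx H) ^t* \is unitarymx by rewrite trmxC_unitary.
rewrite [in X in X <= _](spectral_hermitianE hermH) N_unitary //.
rewrite -(N_unitary T unitV unitVt).
move: (psdmx_congr ((spectralmx H) ^t*) psd_add) (psdmx_congr ((spectralmx H) ^t*) psd_sub).
rewrite !trmxCK mulmxDr mulmxDl mulmxBr mulmxBl spectral_conj //.
exact: N_diag_sandwich.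
Qed.

Lemma N_sub_le_loewner_interval (a b : R) T X Y : a <= b ->
  loewner_le (RtoC a *: T) X -> loewner_le X (RtoC b *: T) ->
  loewner_le (RtoC a *: T) Y -> loewner_le Y (RtoC b *: T) ->
  N (X - Y) <= (b - a) * N T.
Proof.
move=> ab aX Xb aY Yb; rewrite -N_scale ?subr_ge0 //; apply: N_sandwich.
  have -> : RtoC (b - a) *: T + (X - Y) = (X - RtoC a *: T) + (RtoC b *: T - Y).
    by apply/matrixP => i j; rewrite !mxE RtoCB; ring.
  exact: psdmxD.
have -> : RtoC (b - a) *: T - (X - Y) = (RtoC b *: T - X) + (Y - RtoC a *: T).
  by apply/matrixP => i j; rewrite !mxE RtoCB; ring.
exact: psdmxD.
Qed.

End UnitarilyInvariantNorm.

Section OneSidedDerivative.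
Local Open Scope classical_set_scope.
Variables (R : realType) (f : R -> R) (x : R).
Hypothesis f_derivable : derivable f x 1.
Local Notation quotient := (fun h => h^-1 * (f (h + x) - f x)).

Let quotientE : (fun h => h^-1 *: ((f \o shift x) (h *: 1) - f x)) = quotient.
Proof. by apply/funext => h; rewrite /= [_%:A]mulr1. Qed.

Lemma derive1_cvg_right : quotient @ 0^'+ --> derive1 f x.
Proof.
rewrite derive1E -quotientE; apply: cvg_trans f_derivable; apply: cvg_app.
move=> A [r r_gt0 Ar]; exists r => // y yr y_gt0; apply: Ar => //.
exact: lt0r_neq0.
Qed.

Lemma derive1_cvg_left : quotient @ 0^'- --> derive1 f x.
Proof.
rewrite derive1E -quotientE; apply: cvg_trans f_derivable; apply: cvg_app.
move=> A [r r_gt0 Ar]; exists r => // y yr y_lt0; apply: Ar => //.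
exact: ltr0_neq0.
Qed.

Lemma derive1_ge_right c e : 0 < e ->
  (forall h, 0 < h < e -> c <= quotient h) -> c <= derive1 f x.
Proof.
move=> e_gt0 c_le; apply: (cvgr_to_ge derive1_cvg_right).
near=> h; apply: c_le; apply/andP; split; near: h.
  exact: nbhs_right_gt.
exact: nbhs_right_lt.
Unshelve. all: by end_near. Qed.

Lemma derive1_le_right c e : 0 < e ->
  (forall h, 0 < h < e -> quotient h <= c) -> derive1 f x <= c.
Proof.
move=> e_gt0 le_c; apply: (cvgr_to_le derive1_cvg_right).
near=> h; apply: le_c; apply/andP; split; near: h.
  exact: nbhs_right_gt.
exact: nbhs_right_lt.
Unshelve. all: by end_near. Qed.

Lemma derive1_ge_left c e : 0 < e ->
  (forall h, - e < h < 0 -> c <= quotient h) -> c <= derive1 f x.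
Proof.
move=> e_gt0 c_le; apply: (cvgr_to_ge derive1_cvg_left).
near=> h; apply: c_le; apply/andP; split; near: h.
  by apply: nbhs_left_gt; rewrite oppr_lt0.
exact: nbhs_left_lt.
Unshelve. all: by end_near. Qed.

End OneSidedDerivative.

Section ConvexThroughOrigin.
Variables (R : realType) (f : R -> R).
Hypothesis f_ge0 : forall x, 0 <= x -> 0 <= f x.
Hypothesis f_convex : forall x y t, 0 <= x -> 0 <= y -> 0 <= t -> t <= 1 ->
  f (t * x + (1 - t) * y) <= t * f x + (1 - t) * f y.
Hypothesis f_derivable : forall x, 0 <= x -> derivable f x 1.
Hypothesis f0 : f 0 = 0.

Lemma convex0_scale x t : 0 <= x -> 0 <= t <= 1 -> f (t * x) <= t * f x.
Proof.
move=> x_ge0 /andP[t_ge0 t_le1].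
by have := f_convex x_ge0 (lexx 0) t_ge0 t_le1; rewrite mulr0 addr0 f0 mulr0 addr0.
Qed.

Lemma convex0_slope x y : 0 < x -> x <= y -> f x / x <= f y / y.
Proof.
move=> x_gt0 xy; have y_gt0 := lt_le_trans x_gt0 xy.
have t_bnd : 0 <= x / y <= 1.
  by rewrite ler_pdivrMr // mul1r xy andbT divr_ge0 // ltW.
have := convex0_scale (ltW y_gt0) t_bnd; rewrite divfK ?gt_eqF // => fx_le.
rewrite ler_pdivrMr // (le_trans fx_le) // le_eqVlt; apply/orP; left; apply/eqP.
by rewrite mulrC mulrA mulrAC.
Qed.

Lemma derive1_0_ge0 : 0 <= derive1 f 0.
Proof.
apply: (derive1_ge_right (f_derivable (lexx 0)) ltr01) => h /andP[h_gt0 _].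
rewrite addr0 f0 subr0 mulr_ge0 // ?invr_ge0 ?f_ge0 //; exact: ltW.
Qed.

Lemma derive1_0_mul_le x : 0 <= x -> derive1 f 0 * x <= f x.
Proof.
rewrite le_eqVlt => /orP[/eqP <-|x_gt0]; first by rewrite mulr0 f0.
rewrite -ler_pdivlMr //.
apply: (derive1_le_right (f_derivable (lexx 0)) x_gt0) => h /andP[h_gt0 hx].
by rewrite addr0 f0 subr0 mulrC convex0_slope ?ltW.
Qed.

Lemma slope_le_derive1 M : 0 < M -> f M / M <= derive1 f M.
Proof.
move=> M_gt0; apply: (derive1_ge_left (f_derivable (ltW M_gt0)) M_gt0).
move=> h /andP[hM h_lt0]; have y_gt0 : 0 < h + M by lra.
have /(convex0_slope y_gt0) : h + M <= M by lra.
rewrite ler_pdivrMr // mulrDr => fy.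
have fM : f M = f M / M * M by rewrite divfK ?gt_eqF.
rewrite -(ler_nM2l h_lt0) mulrA mulfV ?lt_eqF // mul1r [h * _]mulrC; lra.
Qed.

Lemma le_derive1_mul M x : 0 < M -> 0 <= x <= M -> f x <= derive1 f M * x.
Proof.
move=> M_gt0 /andP[]; rewrite le_eqVlt => /orP[/eqP <- _|x_gt0 xM].
  by rewrite f0 mulr0.
rewrite -ler_pdivrMr //.
exact: le_trans (convex0_slope x_gt0 xM) (slope_le_derive1 M_gt0).
Qed.

End ConvexThroughOrigin.

Lemma le_mul_of_forall_gt (R : realFieldType) (u v w : R) : 0 <= w ->
  (forall e, 0 < e -> u <= (v + e) * w) -> u <= v * w.
Proof.
move=> w_ge0 u_le; apply/ler_addgt0Pr => e e_gt0.
have w1_gt0 : 0 < w + 1 by lra.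
apply: le_trans (u_le (e / (w + 1)) (divr_gt0 e_gt0 w1_gt0)) _.
rewrite mulrDl lerD2l mulrAC ler_pdivrMr // ler_wpM2l ?(ltW e_gt0) //; lra.
Qed.

Section MeanOfFunctionalCalculus.
Variables (R : realType) (n : nat).
Variable sigma : 'M[R[i]]_n -> 'M[R[i]]_n -> 'M[R[i]]_n.
Hypothesis mean_sigma : matrix_mean sigma.
Variable N : 'M[R[i]]_n -> R.
Hypothesis normN : unitarily_invariant_norm N.

Lemma N_mean_mxfun_le (g : R -> R) (a b c M : R) (A B : 'M[R[i]]_n) :
  0 <= a -> 0 < b -> 0 <= c -> 0 < M ->
  (forall x, 0 <= x <= M -> a * x <= g x <= b * x) ->
  psdmx A -> psdmx B -> spec_in c M A -> spec_in c M B ->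
  N (sigma (mxfun g A) (mxfun g B) - mxfun g (sigma A B)) <= (b - a) * N (sigma A B).
Proof.
move=> a_ge0 b_gt0 c_ge0 M_gt0 g_bnd psdA psdB specA specB.
have g_bnd_c x : c <= x <= M -> a * x <= g x <= b * x.
  by case/andP=> cx xM; apply: g_bnd; rewrite xM (le_trans c_ge0).
have psd_mxfun (Z : 'M[R[i]]_n) : psdmx Z -> spec_in c M Z -> psdmx (mxfun g Z).
  move=> [hermZ _] specZ; apply: (psdmx_mxfun hermZ specZ) => x cxM.
  have /andP[ax_le _] := g_bnd_c x cxM; apply: le_trans ax_le.
  by case/andP: cxM => cx _; rewrite mulr_ge0 // (le_trans c_ge0).
have psdT := mean_psdmx mean_sigma psdA psdB.
have specT : spec_in 0 M (sigma A B).
  split; first by rewrite /loewner_le raddf0 subr0.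
  exact: (mean_le_scalar mean_sigma M_gt0 psdA psdB (proj2 specA) (proj2 specB)).
have [lo_A hi_A] := mxfun_loewner_bounds (proj1 psdA) specA g_bnd_c.
have [lo_B hi_B] := mxfun_loewner_bounds (proj1 psdB) specB g_bnd_c.
have [lo_T hi_T] := mxfun_loewner_bounds (proj1 psdT) specT g_bnd.
have [psd_gA psd_gB] := (psd_mxfun A psdA specA, psd_mxfun B psdB specB).
apply: (N_sub_le_loewner_interval normN _ _ _ lo_T hi_T).
- have /andP[aM Mb] : a * M <= g M <= b * M by apply: g_bnd; rewrite lexx ltW.
  by rewrite -(ler_pM2r M_gt0) (le_trans aM Mb).
- exact: (mean_ge_scale mean_sigma a_ge0 psdA psdB psd_gA psd_gB lo_A lo_B).
exact: (mean_le_scale mean_sigma b_gt0 psdA psdB psd_gA psd_gB hi_A hi_B).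
Qed.

End MeanOfFunctionalCalculus.

Theorem mainTheorem3 (R : realType) (f : R -> R) (m M : R) (n : nat)
    (sigma : 'M[R[i]]_n -> 'M[R[i]]_n -> 'M[R[i]]_n)
    (N : 'M[R[i]]_n -> R) (A B : 'M[R[i]]_n) :
  (forall x, 0 <= x -> 0 <= f x) ->
  (forall x y t, 0 <= x -> 0 <= y -> 0 <= t -> t <= 1 ->
     f (t * x + (1 - t) * y) <= t * f x + (1 - t) * f y) ->
  (forall x, 0 <= x -> derivable f x 1) ->
  f 0 = 0 ->
  0 < m -> m < M ->
  matrix_mean sigma ->
  unitarily_invariant_norm N ->
  pdmx A -> pdmx B -> spec_in m M A -> spec_in m M B ->
  N (sigma (mxfun f A) (mxfun f B) - mxfun f (sigma A B))
    <= (derive1 f M - derive1 f 0) * N (sigma A B).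
Proof.
move=> f_ge0 f_convex f_der f0 m_gt0 mM mean_sigma normN pdA pdB specA specB.
have M_gt0 : 0 < M := lt_trans m_gt0 mM.
have a_ge0 := derive1_0_ge0 f_ge0 f_der f0.
have b_ge0 : 0 <= derive1 f M.
  apply: le_trans (slope_le_derive1 f_convex f_der f0 M_gt0).
  by rewrite divr_ge0 ?f_ge0 ?ltW.
apply: le_mul_of_forall_gt (N_ge0 normN _) _ => e e_gt0; rewrite addrAC.
apply: (N_mean_mxfun_le mean_sigma normN a_ge0 _ (ltW m_gt0) M_gt0 _
  (pdmx_psdmx pdA) (pdmx_psdmx pdB) specA specB).
  by rewrite ltr_wpDl.
move=> x /andP[x_ge0 xM]; rewrite derive1_0_mul_le //=.
apply: le_trans (le_derive1_mul f_convex f_der f0 M_gt0 _) _; first by rewrite x_ge0.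
by rewrite ler_wpM2r // lerDl ltW.
Qed.
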